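(* Let $W\in L^\infty$ and $(X_t)_{t\in\mathbb{T}}\in\mathcal{A}(W)$. Then $(X_t)$ is Pareto optimal if and only if there exists $\lambda\in(0,\infty)^T$ such that $(X_t)$ solves Problem $\mathrm{P}_\lambda$.
   Context: Let $T\ge 1$ be an integer and $\mathbb{T}=\{1,\dots,T\}$. Let $(\Omega,\mathcal{F},(\mathcal{F}_t)_{t\in\{0,1,\dots,T\}},P)$ be a filtered probability space and $L^{\infty}=L^{\infty}(\Omega,\mathcal{F}_T,P)$. Let $(r_t)_{t\in\mathbb{T}}$ be a bounded, nonnegative, predictable process ($r_t$ is $\mathcal{F}_{t-1}$-measurable), $B_0=1$, $B_t=\prod_{k=1}^t(1+r_k)$, and for a process $(X_t)$ write $\tilde X_t=X_t/B_t$. For $W\in L^\infty$, $\mathcal{A}(W)$ is the set of $(\mathcal{F}_t)$-adapted processes $(Y_t)_{t\in\mathbb{T}}$ with $Y_t\in L^\infty$ for all $t$ and $\sum_{t\in\mathbb{T}}\tilde Y_t=W$ a.s. For each $t\in\mathbb{T}$, $u_t:\mathbb{R}\to\mathbb{R}$ is strictly concave, $C^1$, with $u_t'(x)>0$ for all $x$. For $\lambda\in\mathbb{R}_+^T\setminus\{0\}$, Problem $\mathrm{P}_\lambda$ is: maximize $\sum_{t\in\mathbb{T}}\lambda_tE[u_t(\tilde Y_t)]$ over $(Y_t)\in\mathcal{A}(W)$. An allocation $(X_t)\in\mathcal{A}(W)$ is Pareto optimal if there is no $(Y_t)\in\mathcal{A}(W)$ with $E[u_t(\tilde Y_t)]\ge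 E[u_t(\tilde X_t)]$ for all $t\in\mathbb{T}$ and $E[u_{t_0}(\tilde Y_{t_0})]>E[u_{t_0}(\tilde X_{t_0})]$ for at least one $t_0\in\mathbb{T}$. *)

From mathcomp Require Import all_boot all_order all_algebra.
From mathcomp Require Import all_classical all_reals all_analysis.
Set Implicit Arguments. Unset Strict Implicit. Unset Printing Implicit Defensive.
Import Order.TTheory GRing.Theory Num.Theory.
Import numFieldNormedType.Exports.
Local Open Scope classical_set_scope.
Local Open Scope ring_scope.

Section Defs.
Context {d : measure_display} {Omega : measurableType d} {R : realType}.

Definition measurable_wrt (G : set (set Omega)) (f : Omega -> R) :=
  forall B : set R, measurable B -> G (f @^-1` B).

Definition filtration (T : nat) (F : nat -> set (set Omega)) :=
  [/\ (forall t, (t <= T)%N -> sigma_algebra setT (F t)),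
      (forall t, (t <= T)%N -> F t `<=` measurable) &
      (forall s t, (s <= t <= T)%N -> F s `<=` F t)].

Definition Linfty (P : probability Omega R) (G : set (set Omega))
    (f : Omega -> R) :=
  measurable_wrt G f /\ exists M : R, {ae P, forall w, `|f w| <= M}.

Definition bank (r : nat -> Omega -> R) (t : nat) (w : Omega) : R :=
  \prod_(1 <= k < t.+1) (1 + r k w).

Definition disc (r : nat -> Omega -> R) (X : nat -> Omega -> R) t w : R :=
  X t w / bank r t w.

(* the set A(W) of admissible allocations (indices t = 1..T are relevant) *)
Definition admissible (P : probability Omega R) (T : nat)
    (F : nat -> set (set Omega)) (r : nat -> Omega -> R)
    (W : Omega -> R) (Y : nat -> Omega -> R) :=
  (forall t, (1 <= t <= T)%N -> measurable_wrt (F t) (Y t) /\ Linfty P (F T) (Y t))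
  /\ {ae P, forall w, \sum_(1 <= t < T.+1) disc r Y t w = W w}.

Definition expected_utility (P : probability Omega R)
    (u : nat -> R -> R) (r : nat -> Omega -> R) (X : nat -> Omega -> R) t
    : \bar R :=
  (\int[P]_w (u t (disc r X t w))%:E)%E.

Definition pareto_optimal (P : probability Omega R) (T : nat)
    (F : nat -> set (set Omega)) (r : nat -> Omega -> R)
    (u : nat -> R -> R) (W : Omega -> R) (X : nat -> Omega -> R) :=
  admissible P T F r W X /\
  ~ exists Y, admissible P T F r W Y /\
      (forall t, (1 <= t <= T)%N ->
         (expected_utility P u r X t <= expected_utility P u r Y t)%E) /\
      (exists t0, (1 <= t0 <= T)%N /\
         (expected_utility P u r X t0 < expected_utility P u r Y t0)%E).

Definition solves_P (P : probability Omega R) (T : nat)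
    (F : nat -> set (set Omega)) (r : nat -> Omega -> R)
    (u : nat -> R -> R) (W : Omega -> R) (lam : nat -> R)
    (X : nat -> Omega -> R) :=
  admissible P T F r W X /\
  forall Y, admissible P T F r W Y ->
    (\sum_(1 <= t < T.+1) ((lam t)%:E * expected_utility P u r Y t)
      <= \sum_(1 <= t < T.+1) ((lam t)%:E * expected_utility P u r X t))%E.

End Defs.

Definition strictly_concave {R : realType} (f : R -> R) :=
  forall x y : R, x != y -> forall a : R, 0 < a < 1 ->
    a * f x + (1 - a) * f y < f (a * x + (1 - a) * y).

Definition C1_increasing {R : realType} (f : R -> R) :=
  (forall x : R, derivable f x 1) /\ continuous (derive1 f) /\
  (forall x : R, 0 < derive1 f x).

From mathcomp Require Import all_boot all_order all_algebra.
From mathcomp Require Import all_classical all_reals all_analysis.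
From mathcomp Require Import ring lra measurable_realfun.
Import Order.TTheory GRing.Theory Num.Theory.
Import numFieldNormedType.Exports.
Set Implicit Arguments. Unset Strict Implicit. Unset Printing Implicit Defensive.
Local Open Scope classical_set_scope.
Local Open Scope ring_scope.

(* If X maximises a weighted sum of expected utilities with positive weights, a
   Pareto improvement would strictly increase that sum, so X is Pareto optimal.
   Conversely, let X be Pareto optimal and put lam_t = 1 / E[u_t'(X~_t)].  For an
   admissible Y, concavity gives E[u_t(Y~_t)] <= E[u_t(X~_t)] + s_t with slopes
   s_t = E[u_t'(X~_t) (Y~_t - X~_t)], so it suffices that c = sum_t lam_t s_t <= 0.
   If c > 0, subtract from each direction Y~_t - X~_t the constant
   k_t = lam_t s_t - c / T; since sum_t k_t = 0, the allocations
   X + e (Y - X - k B) stay admissible, and every slope becomes E[u_t'(X~_t)] c / T > 0.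
   By dominated convergence a small step e then raises every expected utility,
   contradicting Pareto optimality. *)

Section RealFunctions.
Context {R : realType}.

Lemma concave_le_tangent (f : R -> R) (x y : R) :
  (forall a, 0 < a < 1 -> a * f y + (1 - a) * f x <= f (a * y + (1 - a) * x)) ->
  derivable f x 1 -> f y <= f x + derive1 f x * (y - x).
Proof.
move=> f_concave fx; have [->|yx] := eqVneq y x; first by rewrite subrr mulr0 addr0.
pose s n : R := n.+2%:R^-1.
have s_gt0 n : 0 < s n by rewrite invr_gt0.
have s_lt1 n : s n < 1 by rewrite invf_lt1 // ltr1n.
have s_cvg0 : s n @[n --> \oo] --> 0.
  by have := @cvg_harmonic R; rewrite -cvg_shiftS.
pose h n := s n * (y - x).
have h_neq0 n : h n != 0 by rewrite mulf_neq0 ?subr_eq0 // gt_eqF.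
have h_cvg0 : h n @[n --> \oo] --> 0.
  by rewrite -(mul0r (y - x)); apply: cvgMl.
have Df := (cvgr_dnbhsP _ 0 _).1 fx h (conj h_neq0 h_cvg0).
rewrite derive1E -lerBlDl mulrC.
have DfM : (fun n => (y - x) * ((h n)^-1 *: ((f \o shift x) (h n *: 1) - f x)))
    @ \oo --> (y - x) * 'D_1 f x by exact: cvgMr.
apply: (cvgr_to_ge DfM); apply: nearW => n /=.
(* the difference quotient at [h n] is the chord slope on [x, x + s n (y - x)] *)
have -> : (h n)%:A + x = s n * y + (1 - s n) * x.
  by rewrite /GRing.scale /= mulr1 /h; ring.
have -> : (y - x) * ((h n)^-1 *: (f (s n * y + (1 - s n) * x) - f x))
    = (s n)^-1 * (f (s n * y + (1 - s n) * x) - f x).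
  rewrite /GRing.scale /= /h invfM mulrA mulrCA mulfV ?mulr1 //.
  by rewrite subr_eq0.
have := f_concave (s n) (andb_true_intro (conj (s_gt0 n) (s_lt1 n))).
by rewrite ler_pdivlMl //; lra.
Qed.

Lemma strictly_concave_le_tangent (f : R -> R) (x y : R) :
  strictly_concave f -> derivable f x 1 -> f y <= f x + derive1 f x * (y - x).
Proof.
move=> f_concave; apply: concave_le_tangent => a a01.
have [->|yx] := eqVneq y x; first by rewrite -!mulrDl addrCA subrr addr0 !mul1r.
exact/ltW/f_concave.
Qed.

Lemma continuous_bounded_ball (phi : R -> R) (M : R) : continuous phi ->
  exists K, forall x, `|x| <= M -> `|phi x| <= K.
Proof.
move=> phi_cont; have [M_ge0|M_lt0] := leP 0 M; last first.
  by exists 0 => x /(le_trans (normr_ge0 x)); rewrite leNgt M_lt0.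
have cont_norm : {within `[- M, M], continuous (fun x => `|phi x|)}.
  apply: continuous_subspaceT => x.
  exact: continuous_comp (phi_cont x) (@norm_continuous _ R^o _).
have M_ge_oppM : - M <= M by lra.
have [c _ c_max] := EVT_max M_ge_oppM cont_norm.
by exists `|phi c| => x hx; apply: c_max; rewrite in_itv /= -ler_norml.
Qed.

Lemma continuous_inv_max1 : continuous (fun x : R => (Num.max x 1)^-1).
Proof.
move=> x; apply: (@continuousV _ R^o (fun x : R => Num.max x 1)).
  by rewrite gt_eqF // (lt_le_trans ltr01) // le_max lexx orbT.
exact: (@continuous_max _ R^o id (fun=> 1)) (cvg_id) (cvg_cst _).
Qed.

End RealFunctions.

Section MeasurableWrt.
Context {d : measure_display} {Omega : measurableType d} {R : realType}.
Implicit Types (G H : set (set Omega)) (f g : Omega -> R).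

Lemma measurable_wrt_sub G H f :
  G `<=` H -> measurable_wrt G f -> measurable_wrt H f.
Proof. by move=> GH mf B mB; apply/GH/mf. Qed.

Lemma measurable_wrt_measurable G f :
  G `<=` measurable -> measurable_wrt G f -> measurable_fun setT f.
Proof. by move=> Gm mf _ B mB; rewrite setTI; apply/Gm/mf. Qed.

Variable G : set (set Omega).
Hypothesis sigmaG : sigma_algebra setT G.

Lemma measurable_wrtP f :
  measurable_wrt G f <-> @measurable_fun _ _ (g_sigma_algebraType G) R setT f.
Proof.
have mG : (measurable : set (set (g_sigma_algebraType G))) = G.
  exact: measurable_g_measurableTypeE.
split=> [mf _ B mB|mf B mB]; first by rewrite setTI mG; exact: mf.
by have := mf measurableT B mB; rewrite setTI mG.
Qed.

Lemma measurable_wrt_cst (c : R) : measurable_wrt G (fun=> c).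
Proof. exact/measurable_wrtP/measurable_cst. Qed.

Lemma measurable_wrtD f g : measurable_wrt G f -> measurable_wrt G g ->
  measurable_wrt G (fun w => f w + g w).
Proof.
by move=> /measurable_wrtP mf /measurable_wrtP mg; apply/measurable_wrtP/measurable_funD.
Qed.

Lemma measurable_wrtM f g : measurable_wrt G f -> measurable_wrt G g ->
  measurable_wrt G (fun w => f w * g w).
Proof.
by move=> /measurable_wrtP mf /measurable_wrtP mg; apply/measurable_wrtP/measurable_funM.
Qed.

Lemma measurable_wrt_comp (phi : R -> R) f : continuous phi ->
  measurable_wrt G f -> measurable_wrt G (fun w => phi (f w)).
Proof.
move=> phi_cont /measurable_wrtP mf; apply/measurable_wrtP.
exact: measurableT_comp (continuous_measurable_fun phi_cont) mf.
Qed.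

Lemma measurable_wrtN f : measurable_wrt G f -> measurable_wrt G (fun w => - f w).
Proof. exact/measurable_wrt_comp/opp_continuous. Qed.

End MeasurableWrt.

Section Linfty.
Context {d : measure_display} {Omega : measurableType d} {R : realType}.
Variables (P : probability Omega R) (G : set (set Omega)).
Hypotheses (sigmaG : sigma_algebra setT G) (G_measurable : G `<=` measurable).
Implicit Types f g h : Omega -> R.

Lemma Linfty_cst (c : R) : Linfty P G (fun=> c).
Proof. by split; [exact: measurable_wrt_cst | exists `|c|; apply: nearW]. Qed.

Lemma LinftyD f g : Linfty P G f -> Linfty P G g -> Linfty P G (fun w => f w + g w).
Proof.
move=> [mf [M fM]] [mg [N gN]]; split; first exact: measurable_wrtD.
exists (M + N); apply: filterS2 fM gN => w fwM gwN.
by rewrite (le_trans (ler_normD _ _)) // lerD.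
Qed.

Lemma LinftyN f : Linfty P G f -> Linfty P G (fun w => - f w).
Proof.
move=> [mf [M fM]]; split; first exact: measurable_wrtN.
by exists M; apply: filterS fM => w; rewrite normrN.
Qed.

Lemma LinftyM f g : Linfty P G f -> Linfty P G g -> Linfty P G (fun w => f w * g w).
Proof.
move=> [mf [M fM]] [mg [N gN]]; split; first exact: measurable_wrtM.
exists (`|M| * `|N|); apply: filterS2 fM gN => w fwM gwN.
by rewrite normrM ler_pM // (le_trans _ (ler_norm _)).
Qed.

Lemma Linfty_comp (phi : R -> R) f : continuous phi ->
  Linfty P G f -> Linfty P G (fun w => phi (f w)).
Proof.
move=> phi_cont [mf [M fM]]; split; first exact: measurable_wrt_comp.
have [K phiK] := continuous_bounded_ball M phi_cont.
by exists K; apply: filterS fM => w /phiK.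
Qed.

Lemma Linfty_integrable f : Linfty P G f -> P.-integrable setT (EFin \o f).
Proof.
move=> [mf [M fM]].
have /measurable_EFinP mEf := measurable_wrt_measurable G_measurable mf.
apply/integrableP; split => //; apply: (@le_lt_trans _ _ ((`|M|)%:E * P setT)%E).
  apply: integral_le_bound => //.
  by apply: filterS fM => w fwM _ /=; rewrite lee_fin (le_trans fwM) // ler_norm.
by rewrite probability_setT mule1 ltry.
Qed.

Lemma Linfty_integralE f : Linfty P G f -> (\int[P]_w (f w)%:E)%E = (\int[P]_w f w)%:E.
Proof.
by move=> Lf; rewrite /Rintegral fineK //; exact: integrable_fin_num (Linfty_integrable Lf).
Qed.

Lemma Rintegral_mulrBr_cst f g (c : R) : Linfty P G f -> Linfty P G g ->
  \int[P]_w (f w * (g w - c)) = \int[P]_w (f w * g w) - c * \int[P]_w f w.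
Proof.
move=> Lf Lg; under eq_Rintegral do rewrite mulrBr.
rewrite RintegralB //; last 2 first.
- exact: Linfty_integrable (LinftyM Lf Lg).
- exact: Linfty_integrable (LinftyM Lf (Linfty_cst c)).
by rewrite RintegralZr ?(Linfty_integrable Lf) // mulrC.
Qed.

Lemma Rintegral_shift_cvg (phi : R -> R) f h : continuous phi ->
  Linfty P G f -> Linfty P G h ->
  \int[P]_w (phi (f w + n.+1%:R^-1 * h w) * h w) @[n --> \oo] -->
  \int[P]_w (phi (f w) * h w).
Proof.
move=> phi_cont Lf Lh; have [_ [Mf fM]] := Lf; have [_ [Mh hM]] := Lh.
have [K phiK] := continuous_bounded_ball (`|Mf| + `|Mh|) phi_cont.
pose fn n w := phi (f w + n.+1%:R^-1 * h w) * h w.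
pose fl w := phi (f w) * h w.
have Lfn n : Linfty P G (fn n).
  by apply: LinftyM => //; apply: Linfty_comp => //; apply: LinftyD => //;
    apply: LinftyM => //; exact: Linfty_cst.
have Lfl : Linfty P G fl by apply: LinftyM => //; exact: Linfty_comp.
have mfn n : measurable_fun setT (EFin \o fn n).
  by case: (Lfn n) => /(measurable_wrt_measurable G_measurable)/measurable_EFinP.
have mfl : measurable_fun setT (EFin \o fl).
  by case: Lfl => /(measurable_wrt_measurable G_measurable)/measurable_EFinP.
have fn_cvg : {ae P, forall w, setT w -> (EFin \o fn n) w @[n --> \oo] --> (EFin \o fl) w}.
  apply: nearW => w _; apply: cvg_EFin; first exact: nearW.
  apply: cvgMl; apply: (continuous_cvg _ (phi_cont _)).
  rewrite -[X in _ --> X]addr0; apply: cvgD; first exact: cvg_cst.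
  by rewrite -(mul0r (h w)); apply: cvgMl; exact: cvg_harmonic.
have fn_bounded : {ae P, forall w n, setT w ->
    (`|(EFin \o fn n) w| <= (cst (K * `|Mh|)%:E) w)%E}.
  apply: filterS2 fM hM => w fwM hwM n _ /=; rewrite lee_fin /fn normrM.
  have hw : `|h w| <= `|Mh| by apply: le_trans hwM (ler_norm _).
  apply: ler_pM => //; apply: phiK; apply: (le_trans (ler_normD _ _)).
  apply: lerD; first exact: le_trans fwM (ler_norm _).
  rewrite normrM ger0_norm ?invr_ge0 // (le_trans _ hw) // ler_piMl //.
  by rewrite invf_le1 ?ltr0n // ler1n.
have [_ _ cvg_int] := dominated_convergence measurableT mfn mfl fn_cvg
  (Linfty_integrable (Linfty_cst (K * `|Mh|))) fn_bounded.
apply: fine_cvg; rewrite fineK; first exact: cvg_int.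
exact: integrable_fin_num (Linfty_integrable Lfl).
Qed.

Lemma Rintegral_le_supergradient (phi dphi : R -> R) f g :
  (forall x y, phi y <= phi x + dphi x * (y - x)) ->
  continuous phi -> continuous dphi -> Linfty P G f -> Linfty P G g ->
  \int[P]_w phi (g w) <=
  \int[P]_w phi (f w) + \int[P]_w (dphi (f w) * (g w - f w)).
Proof.
move=> phi_tan phi_cont dphi_cont Lf Lg.
have Lphi h : Linfty P G h -> Linfty P G (fun w => phi (h w)) by exact: Linfty_comp.
have Ldphi : Linfty P G (fun w => dphi (f w) * (g w - f w)).
  by apply: LinftyM; [exact: Linfty_comp | apply: LinftyD => //; exact: LinftyN].
rewrite -RintegralD //; last 2 first.
- exact: Linfty_integrable (Lphi _ Lf).
- exact: Linfty_integrable Ldphi.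
apply: le_Rintegral => //; first exact: Linfty_integrable (Lphi _ Lg).
by apply: Linfty_integrable; apply: LinftyD => //; exact: Lphi.
Qed.

Lemma Rintegral_comp_gt0 (psi : R -> R) f : continuous psi -> (forall x, 0 < psi x) ->
  Linfty P G f -> 0 < \int[P]_w psi (f w).
Proof.
move=> psi_cont psi_gt0 Lf; have [_ [M fM]] := Lf.
have M_ge_oppM : - `|M| <= `|M| by rewrite (le_trans _ (normr_ge0 M)) // oppr_le0.
have [c _ c_min] := EVT_min M_ge_oppM (continuous_subspaceT psi_cont).
have Lpsif : Linfty P G (fun w => psi (f w)) by exact: Linfty_comp.
apply: (lt_le_trans (psi_gt0 c)); rewrite -lee_fin -Linfty_integralE //.
rewrite -[leLHS]mule1 -(probability_setT P) -integral_cst //.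
apply: ae_ge0_le_integral => //.
- by move=> w _; rewrite lee_fin ltW.
- by move=> w _; rewrite lee_fin ltW.
- by case: Lpsif => /(measurable_wrt_measurable G_measurable)/measurable_EFinP.
- apply: filterS fM => w fwM _; rewrite lee_fin; apply: c_min.
  by rewrite in_itv /= -ler_norml (le_trans fwM) // ler_norm.
Qed.

Lemma Rintegral_supergradient_increase (phi dphi : R -> R) f h :
  (forall x y, phi y <= phi x + dphi x * (y - x)) ->
  continuous phi -> continuous dphi -> Linfty P G f -> Linfty P G h ->
  0 < \int[P]_w (dphi (f w) * h w) ->
  \forall n \near \oo, \int[P]_w phi (f w) < \int[P]_w phi (f w + n.+1%:R^-1 * h w).
Proof.
move=> phi_tan phi_cont dphi_cont Lf Lh slope_gt0.
pose e n : R := n.+1%:R^-1.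
have Lfn n : Linfty P G (fun w => f w + e n * h w).
  by apply: LinftyD => //; apply: LinftyM => //; exact: Linfty_cst.
near=> n.
have slope_n_gt0 : 0 < \int[P]_w (dphi (f w + e n * h w) * h w).
  by near: n; exact: cvgr_gt _ (Rintegral_shift_cvg dphi_cont Lf Lh) 0 slope_gt0.
(* supergradient inequality at the perturbed point, in the direction of [f] *)
have := Rintegral_le_supergradient phi_tan phi_cont dphi_cont (Lfn n) Lf.
have -> : \int[P]_w (dphi (f w + e n * h w) * (f w - (f w + e n * h w)))
    = - e n * \int[P]_w (dphi (f w + e n * h w) * h w).
  rewrite -RintegralZl //; last first.
    by apply: Linfty_integrable; apply: LinftyM => //; exact: Linfty_comp.
  by apply: eq_Rintegral => w _; ring.
move=> /le_lt_trans; apply; rewrite mulNr gtrDl oppr_lt0.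
by rewrite mulr_gt0 // invr_gt0.
Unshelve. all: by end_near.
Qed.

End Linfty.

Lemma near_forall_le {X : Type} (F : set_system X) (Q : nat -> X -> Prop) m :
  Filter F -> (forall t, (t <= m)%N -> \forall x \near F, Q t x) ->
  \forall x \near F, forall t, (t <= m)%N -> Q t x.
Proof.
move=> FF FQ.
have := @filter_forall _ 'I_m.+1 (fun t => Q t) F FF (fun t => FQ t (ltn_ord t)).
by apply: filterS => x Qx t tm; exact: (Qx (Ordinal (tm : (t < m.+1)%N))).
Qed.

Section DiscountFactor.
Context {d : measure_display} {Omega : measurableType d} {R : realType}.
Variables (T : nat) (r : nat -> Omega -> R).
Hypothesis r_ge0 : forall t w, (1 <= t <= T)%N -> 0 <= r t w.

Lemma bankS t w : bank r t.+1 w = bank r t w * (1 + r t.+1 w).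
Proof. by rewrite /bank big_nat_recr. Qed.

Lemma bank_ge1 t w : (t <= T)%N -> 1 <= bank r t w.
Proof.
elim: t => [|t IH] tT; first by rewrite /bank big_geq.
have r_t_ge0 : 0 <= r t.+1 w by apply: r_ge0; rewrite tT.
by rewrite bankS -[1]mulr1 ler_pM //; [exact: IH (ltnW tT) | lra].
Qed.

(* Since [bank >= 1], the discount factor is a continuous function of [bank]. *)
Lemma discE X t w : (t <= T)%N -> disc r X t w = X t w * (Num.max (bank r t w) 1)^-1.
Proof. by move=> tT; rewrite /disc max_l // bank_ge1. Qed.

Variables (F : nat -> set (set Omega)) (M : R).
Hypotheses (hF : filtration T F)
  (r_pred : forall t, (1 <= t <= T)%N -> measurable_wrt (F t.-1) (r t))
  (r_le : forall t w, (1 <= t <= T)%N -> `|r t w| <= M).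

Lemma bank_le_pow t w : (t <= T)%N -> bank r t w <= (1 + M) ^+ t.
Proof.
elim: t => [|t IH] tT; first by rewrite /bank big_geq.
have r_t_ge0 : 0 <= r t.+1 w by apply: r_ge0; rewrite tT.
have r_leM : r t.+1 w <= M by rewrite (le_trans (ler_norm _)) // r_le // tT.
rewrite bankS exprSr; apply: ler_pM; [|lra|exact: IH (ltnW tT)|lra].
exact: le_trans ler01 (bank_ge1 w (ltnW tT)).
Qed.

Lemma bank_measurable_wrt t : (t <= T)%N -> measurable_wrt (F t) (bank r t).
Proof.
case: hF => sigmaF _ F_mono; elim: t => [|t IH] tT.
  have -> : bank r 0 = fun=> 1 by apply: funext => w; rewrite /bank big_geq.
  exact: (measurable_wrt_cst (sigmaF 0 isT) 1).
have sigmaFt := sigmaF _ tT.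
have -> : bank r t.+1 = fun w => bank r t w * (1 + r t.+1 w).
  by apply: funext => w; rewrite bankS.
have Ft_sub : F t `<=` F t.+1 by apply: F_mono; rewrite leqnSn tT.
apply: measurable_wrtM => //; first exact: (measurable_wrt_sub Ft_sub (IH (ltnW tT))).
apply: measurable_wrtD => //; first exact: (measurable_wrt_cst sigmaFt 1).
have t1T : (0 < t.+1 <= T)%N by rewrite tT.
exact: (measurable_wrt_sub Ft_sub (r_pred t1T)).
Qed.

Variable P : probability Omega R.

Lemma bank_Linfty t : (t <= T)%N -> Linfty P (F T) (bank r t).
Proof.
case: hF => _ _ F_mono tT; split.
  have FtT : F t `<=` F T by apply: F_mono; rewrite tT leqnn.
  exact: (measurable_wrt_sub FtT (bank_measurable_wrt tT)).
exists ((1 + M) ^+ t); apply: nearW => w.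
by rewrite ger0_norm ?bank_le_pow // (le_trans ler01) // bank_ge1.
Qed.

Lemma disc_Linfty X t : (t <= T)%N -> Linfty P (F T) (X t) -> Linfty P (F T) (disc r X t).
Proof.
case: hF => sigmaF _ _ tT LX; have sigmaFT := sigmaF T (leqnn T).
have -> : disc r X t = fun w => X t w * (Num.max (bank r t w) 1)^-1.
  by apply: funext => w; rewrite discE.
exact: (LinftyM sigmaFT LX (Linfty_comp sigmaFT continuous_inv_max1 (bank_Linfty tT))).
Qed.

End DiscountFactor.

Section ParetoOptimality.
Context {d : measure_display} {Omega : measurableType d} {R : realType}.
Variables (P : probability Omega R) (T : nat) (F : nat -> set (set Omega))
  (r : nat -> Omega -> R) (u : nat -> R -> R) (W : Omega -> R) (M : R).
Hypotheses (T_gt0 : (0 < T)%N) (hF : filtration T F)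
  (r_le : forall t w, (1 <= t <= T)%N -> `|r t w| <= M)
  (r_ge0 : forall t w, (1 <= t <= T)%N -> 0 <= r t w)
  (r_pred : forall t, (1 <= t <= T)%N -> measurable_wrt (F t.-1) (r t))
  (hu : forall t, (1 <= t <= T)%N -> strictly_concave (u t) /\ C1_increasing (u t)).

Let sigmaFT : sigma_algebra setT (F T).
Proof. by case: hF => + _ _; apply. Qed.

Let FT_measurable : F T `<=` measurable.
Proof. by case: hF => _ + _; apply. Qed.

Local Hint Resolve sigmaFT FT_measurable : core.

Lemma u_continuous t : (1 <= t <= T)%N -> continuous (u t).
Proof.
move=> /hu[_ [u_der _]] x; apply: differentiable_continuous.
exact/derivable1_diffP.
Qed.

Lemma derive_u_continuous t : (1 <= t <= T)%N -> continuous (derive1 (u t)).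
Proof. by move=> /hu[_ [_ []]]. Qed.

Lemma derive_u_gt0 t x : (1 <= t <= T)%N -> 0 < derive1 (u t) x.
Proof. by move=> /hu[_ [_ [_]]]. Qed.

Lemma u_le_tangent t : (1 <= t <= T)%N ->
  forall x y, u t y <= u t x + derive1 (u t) x * (y - x).
Proof. by move=> /hu[u_conc [u_der _]] x y; exact: strictly_concave_le_tangent. Qed.

Lemma admissible_disc_Linfty Y t : admissible P T F r W Y -> (1 <= t <= T)%N ->
  Linfty P (F T) (disc r Y t).
Proof.
move=> [Y_adm _] /[dup] t1T /andP[_ tT].
exact: (disc_Linfty r_ge0 hF r_pred r_le tT (Y_adm t t1T).2).
Qed.

Lemma expected_utilityE Y t : admissible P T F r W Y -> (1 <= t <= T)%N ->
  expected_utility P u r Y t = (\int[P]_w u t (disc r Y t w))%:E.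
Proof.
move=> Y_adm t1T; apply: Linfty_integralE => //.
exact: Linfty_comp (u_continuous t1T) (admissible_disc_Linfty Y_adm t1T).
Qed.

Lemma weighted_utilityE (lam : nat -> R) Y : admissible P T F r W Y ->
  (\sum_(1 <= t < T.+1) ((lam t)%:E * expected_utility P u r Y t))%E =
  (\sum_(1 <= t < T.+1) lam t * \int[P]_w u t (disc r Y t w))%:E.
Proof.
move=> Y_adm; rewrite -sumEFin; apply: eq_big_nat => t t1T.
by rewrite expected_utilityE.
Qed.

Lemma solves_P_pareto_optimal (lam : nat -> R) X :
  (forall t, (1 <= t <= T)%N -> 0 < lam t) ->
  solves_P P T F r u W lam X -> pareto_optimal P T F r u W X.
Proof.
move=> lam_gt0 [X_adm X_max]; split=> // -[Y [Y_adm [Y_ge [t0 [t0T Y_gt]]]]].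
pose gain t := lam t * \int[P]_w u t (disc r Y t w) - lam t * \int[P]_w u t (disc r X t w).
have gain_ge0 t : (1 <= t <= T)%N -> 0 <= gain t.
  move=> t1T; rewrite /gain -mulrBr; apply: mulr_ge0; first exact/ltW/lam_gt0.
  by rewrite subr_ge0 -lee_fin -!expected_utilityE // Y_ge.
have gain_gt0 : 0 < gain t0.
  by rewrite /gain -mulrBr mulr_gt0 ?lam_gt0 // subr_gt0 -lte_fin -!expected_utilityE.
have := X_max Y Y_adm; rewrite !weighted_utilityE // lee_fin; apply/negP.
rewrite -ltNge -subr_gt0 -sumrB (bigD1_seq t0) ?mem_index_iota ?ltnS ?iota_uniq //=.
rewrite ltr_pwDl // big_seq_cond; apply: sumr_ge0 => t /andP[].
by rewrite mem_index_iota ltnS => t1T _; exact: gain_ge0.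
Qed.

(* The deterministic shift [k t] is expressed in discounted units, hence the factor [bank]. *)
Definition perturb (X Y : nat -> Omega -> R) (k : nat -> R) (e : R) : nat -> Omega -> R :=
  fun t w => X t w + e * (Y t w - X t w - k t * bank r t w).

Lemma disc_perturb X Y k e t w : (t <= T)%N ->
  disc r (perturb X Y k e) t w = disc r X t w + e * (disc r Y t w - disc r X t w - k t).
Proof.
move=> tT; have bank_neq0 : bank r t w != 0.
  by rewrite gt_eqF // (lt_le_trans ltr01) // (bank_ge1 r_ge0 w tT).
by rewrite /disc /perturb; field.
Qed.

Lemma perturb_admissible X Y k e :
  admissible P T F r W X -> admissible P T F r W Y -> \sum_(1 <= t < T.+1) k t = 0 ->
  admissible P T F r W (perturb X Y k e).
Proof.
move=> [X_adm X_sum] [Y_adm Y_sum] k_sum; split=> [t t1T|].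
  have [[mX LX] [mY LY]] := (X_adm t t1T, Y_adm t t1T).
  case: hF => sigmaF _ F_mono; have /andP[_ tT] := t1T.
  have sigmaFt := sigmaF t tT.
  split.
    apply: measurable_wrtD => //; apply: measurable_wrtM => //.
      exact: (measurable_wrt_cst sigmaFt e).
    apply: measurable_wrtD => //; first by apply: measurable_wrtD => //; exact: measurable_wrtN.
    apply: measurable_wrtN => //; apply: measurable_wrtM => //.
      exact: (measurable_wrt_cst sigmaFt (k t)).
    exact: (bank_measurable_wrt hF r_pred tT).
  apply: LinftyD => //; apply: LinftyM => //; first exact: Linfty_cst.
  apply: LinftyD => //; first by apply: LinftyD => //; exact: LinftyN.
  apply: LinftyN => //; apply: LinftyM => //; first exact: Linfty_cst.
  exact: (bank_Linfty r_ge0 hF r_pred r_le P tT).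
apply: filterS2 X_sum Y_sum => w X_sum_w Y_sum_w.
rewrite (eq_big_nat _ _ (F2 := fun t => disc r X t w +
    e * (disc r Y t w - disc r X t w - k t))); last first.
  by move=> t /andP[_]; rewrite ltnS => tT; exact: disc_perturb.
by rewrite big_split /= -mulr_sumr !sumrB X_sum_w Y_sum_w k_sum !subrr mulr0 addr0.
Qed.

Lemma pareto_optimal_no_ascent X Y k :
  pareto_optimal P T F r u W X -> admissible P T F r W Y -> \sum_(1 <= t < T.+1) k t = 0 ->
  ~ (forall t, (1 <= t <= T)%N ->
     0 < \int[P]_w (derive1 (u t) (disc r X t w) * (disc r Y t w - disc r X t w - k t))).
Proof.
move=> [X_adm X_po] Y_adm k_sum slope_gt0.
pose Z n := perturb X Y k n.+1%:R^-1.
have improve t : (t <= T)%N -> \forall n \near \oo, (1 <= t)%N ->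
    \int[P]_w u t (disc r X t w) < \int[P]_w u t (disc r (Z n) t w).
  move=> tT; have [t0|t1] := leqP t 0; first by apply: nearW => n.
  have t1T : (1 <= t <= T)%N by rewrite t1 tT.
  have LX := admissible_disc_Linfty X_adm t1T; have LY := admissible_disc_Linfty Y_adm t1T.
  have Ldir : Linfty P (F T) (fun w => disc r Y t w - disc r X t w - k t).
    apply: LinftyD => //; first by apply: LinftyD => //; exact: LinftyN.
    by apply: LinftyN => //; exact: Linfty_cst.
  have := Rintegral_supergradient_increase sigmaFT FT_measurable (u_le_tangent t1T)
    (u_continuous t1T) (derive_u_continuous t1T) LX Ldir (slope_gt0 t t1T).
  apply: filterS => n improve_n _.
  by under [I in _ < I]eq_Rintegral do rewrite /Z disc_perturb //.
have [n improve_n] := filter_ex (near_forall_le _ improve).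
apply: X_po; exists (Z n); have Z_adm := perturb_admissible n.+1%:R^-1 X_adm Y_adm k_sum.
split=> //; split.
  by move=> t /andP[t1 tT]; rewrite !expected_utilityE ?t1 // lee_fin ltW // improve_n.
exists 1%N; have one_le_T : (1 <= 1 <= T)%N by [].
by split=> //; rewrite !expected_utilityE // lte_fin improve_n.
Qed.

Lemma marginal_utility_gt0 X t : admissible P T F r W X -> (1 <= t <= T)%N ->
  0 < \int[P]_w derive1 (u t) (disc r X t w).
Proof.
move=> X_adm t1T; apply: (Rintegral_comp_gt0 sigmaFT FT_measurable (derive_u_continuous t1T)).
  by move=> x; exact: derive_u_gt0.
exact: admissible_disc_Linfty.
Qed.

Lemma pareto_optimal_solves_P X : pareto_optimal P T F r u W X ->
  solves_P P T F r u W (fun t => (\int[P]_w derive1 (u t) (disc r X t w))^-1) X.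
Proof.
move=> X_po; have [X_adm _] := X_po; split=> // Y Y_adm.
rewrite !weighted_utilityE // lee_fin.
pose a t := \int[P]_w derive1 (u t) (disc r X t w).
pose slope t := \int[P]_w (derive1 (u t) (disc r X t w) * (disc r Y t w - disc r X t w)).
have LX t := admissible_disc_Linfty X_adm (t := t).
have LY t := admissible_disc_Linfty Y_adm (t := t).
have a_gt0 t : (1 <= t <= T)%N -> 0 < a t by exact: marginal_utility_gt0.
have tangent t : (1 <= t <= T)%N ->
    \int[P]_w u t (disc r Y t w) <= \int[P]_w u t (disc r X t w) + slope t.
  move=> t1T; exact: (Rintegral_le_supergradient sigmaFT FT_measurable (u_le_tangent t1T)
    (u_continuous t1T) (derive_u_continuous t1T) (LX t t1T) (LY t t1T)).
suff slope_le0 : \sum_(1 <= t < T.+1) (a t)^-1 * slope t <= 0.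
  apply: (le_trans (y := \sum_(1 <= t < T.+1)
    ((a t)^-1 * \int[P]_w u t (disc r X t w) + (a t)^-1 * slope t))).
    apply: ler_sum_nat => t; rewrite ltnS => t1T.
    by rewrite -mulrDr ler_pM2l ?invr_gt0 ?a_gt0 ?tangent.
  by rewrite big_split /= gerDl.
rewrite leNgt; apply/negP => c_gt0; set c := \sum_(1 <= t < T.+1) _ in c_gt0.
pose k t := (a t)^-1 * slope t - c / T%:R.
have T_neq0 : T%:R != 0 :> R by rewrite pnatr_eq0 -lt0n.
apply: (pareto_optimal_no_ascent (k := k) X_po Y_adm).
  by rewrite sumrB sumr_const_nat subn1 /= -/c -[_ *+ T]mulr_natr mulfVK // subrr.
move=> t t1T; rewrite (Rintegral_mulrBr_cst sigmaFT FT_measurable); last 2 first.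
- exact: (Linfty_comp sigmaFT (derive_u_continuous t1T) (LX t t1T)).
- by apply: LinftyD => //; [exact: LY | apply: LinftyN => //; exact: LX].
rewrite -/(slope t) -/(a t) /k.
have -> : slope t - ((a t)^-1 * slope t - c / T%:R) * a t = a t * (c / T%:R).
  by field; rewrite T_neq0 gt_eqF ?a_gt0.
by rewrite mulr_gt0 ?a_gt0 // divr_gt0 // ltr0n.
Qed.

End ParetoOptimality.

Theorem theorem2p13 (R : realType) (d : measure_display) (Omega : measurableType d)
  (P : probability Omega R) (T : nat) (F : nat -> set (set Omega))
  (r : nat -> Omega -> R) (u : nat -> R -> R) (W : Omega -> R)
  (X : nat -> Omega -> R) :
  (1 <= T)%N ->
  filtration T F ->
  (exists M : R, forall t w, (1 <= t <= T)%N -> `|r t w| <= M) ->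
  (forall t w, (1 <= t <= T)%N -> 0 <= r t w) ->
  (forall t, (1 <= t <= T)%N -> measurable_wrt (F t.-1) (r t)) ->
  (forall t, (1 <= t <= T)%N -> strictly_concave (u t) /\ C1_increasing (u t)) ->
  Linfty P (F T) W ->
  admissible P T F r W X ->
  (pareto_optimal P T F r u W X <->
   exists lam : nat -> R, (forall t, (1 <= t <= T)%N -> 0 < lam t) /\
     solves_P P T F r u W lam X).
Proof.
move=> T_gt0 hF [M r_le] r_ge0 r_pred hu _ X_adm; split.
- move=> X_po; eexists; split; last first.
    exact: (pareto_optimal_solves_P T_gt0 hF r_le r_ge0 r_pred hu X_po).
  by move=> t t1T; rewrite invr_gt0 (marginal_utility_gt0 hF r_le r_ge0 r_pred hu X_adm t1T).
- move=> [lam [lam_gt0 X_solves]].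
  exact: (solves_P_pareto_optimal hF r_le r_ge0 r_pred hu lam_gt0 X_solves).
Qed.
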